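(* Let $\phi$ be a reduced Boolean formula in the input variables $x_1,\dots,x_n$ and let $Q \subseteq [0,1]^n$ be a polytope such that $\phi(Q) \neq \emptyset$. Then $\phi(Q)$ is a polytope with extension complexity $\operatorname{xc}(\phi(Q)) \le |\phi| \operatorname{xc}(Q)$.
   Context: Boolean formulas are built from input variables $x_1,\dots,x_n$ using $\wedge$, $\vee$, $\neg$. A formula is reduced if negations are applied only to input variables. The size $|\phi|$ of a formula is the total number of occurrences of input variables in it. For a reduced formula $\phi$ and a convex set $Q \subseteq [0,1]^n$, the set $\phi(Q)$ is defined recursively: a non-negated variable $x_i$ is replaced by $\{x \in Q : x_i = 1\}$; a negated variable $\neg x_i$ by $\{x \in Q : x_i = 0\}$; a conjunction of two subformulas by the intersection of the corresponding sets; a disjunction by the convex hull of the union of the corresponding sets. An extended formulation of size $m$ of a polytope $P \subseteq \mathbb{R}^n$ consists of $T \in \mathbb{R}^{n\times d}$, $A \in \mathbb{R}^{m \times d}$, $t \in \mathbb{R}^n$, $b \in \mathbb{R}^m$ with $P = \{x : \exists y \in \mathbb{R}^d,\ Ay \ge b,\ x = Ty+t\}$; the extension complexity $\operatorname{xc}(P)$ is the smallest size of an extended formulation of $P$. *)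

From HB Require Import structures.
From mathcomp Require Import all_boot all_order all_algebra.
From mathcomp Require Import boolp classical_sets reals.
Set Implicit Arguments. Unset Strict Implicit. Unset Printing Implicit Defensive.
Import Order.TTheory GRing.Theory Num.Theory.
Local Open Scope classical_set_scope.
Local Open Scope ring_scope.

Inductive formula (n : nat) : Type :=
  | FVar of 'I_n
  | FNeg of formula n
  | FAnd of formula n & formula n
  | FOr of formula n & formula n.

Fixpoint reduced n (phi : formula n) : Prop :=
  match phi with
  | FVar _ => True
  | FNeg (FVar _) => True
  | FNeg _ => False
  | FAnd f g => reduced f /\ reduced g
  | FOr f g => reduced f /\ reduced g
  end.

Fixpoint fsize n (phi : formula n) : nat :=
  match phi with
  | FVar _ => 1
  | FNeg f => fsize f
  | FAnd f g => fsize f + fsize g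
  | FOr f g => fsize f + fsize g
  end.

Definition conv (R : realType) n (S : set 'cV[R]_n) : set 'cV[R]_n :=
  [set x | exists k (w : 'I_k -> R) (p : 'I_k -> 'cV[R]_n),
     (forall i, 0 <= w i) /\ \sum_(i < k) w i = 1 /\
     (forall i, S (p i)) /\ x = \sum_(i < k) w i *: p i].

(* phi(Q), defined for reduced formulas (the non-variable negation case is
   irrelevant for reduced formulas and set to the empty set). *)
Fixpoint phiQ (R : realType) n (phi : formula n) (Q : set 'cV[R]_n)
  : set 'cV[R]_n :=
  match phi with
  | FVar i => [set x | Q x /\ x i 0 = 1]
  | FNeg (FVar i) => [set x | Q x /\ x i 0 = 0]
  | FNeg _ => set0
  | FAnd f g => phiQ f Q `&` phiQ g Q
  | FOr f g => conv (phiQ f Q `|` phiQ g Q)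
  end.

Definition cube (R : realType) n : set 'cV[R]_n :=
  [set x | forall i, 0 <= x i 0 <= 1].

Definition polytope (R : realType) n (P : set 'cV[R]_n) : Prop :=
  exists k (p : 'I_k -> 'cV[R]_n), P = conv (range p).

Definition has_ef (R : realType) n (P : set 'cV[R]_n) (m : nat) : Prop :=
  exists (d : nat) (T : 'M[R]_(n, d)) (A : 'M[R]_(m, d))
         (t : 'cV[R]_n) (b : 'cV[R]_m),
    P = [set x | exists y : 'cV[R]_d,
                   (forall j, b j 0 <= (A *m y) j 0) /\ x = T *m y + t].

(* Extension complexity: the smallest size of an extended formulation
   (0 by convention if none exists, which does not happen for polytopes). *)
Definition xc (R : realType) n (P : set 'cV[R]_n) : nat :=
  match pselect (exists m, has_ef P m) with
  | left H => @ex_minn (fun m => `[< has_ef P m >])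
                 (let: ex_intro m Hm := H in ex_intro _ m (asboolT Hm))
  | right _ => 0%N
  end.

From HB Require Import structures.
From mathcomp Require Import all_boot all_order all_algebra.
From mathcomp Require Import boolp classical_sets reals.
From mathcomp Require Import lra ring.
Set Implicit Arguments. Unset Strict Implicit. Unset Printing Implicit Defensive.
Import Order.TTheory GRing.Theory Num.Theory.
Local Open Scope classical_set_scope.
Local Open Scope ring_scope.

(* Call a homogeneous formulation of P of size m a description
     P = [set T y | A y >= 0, E y = 0, c y = 1]
   with m rows in A, such that c y >= 0 on the cone [A y >= 0, E y = 0], and
   T y = 0 when moreover c y = 0.  Only inequalities count: eliminating the
   equations by parametrising their solution space yields an extended
   formulation of size m, whose recession directions are invisible in x.
   These formulations follow the recursive definition of phi(Q): a hyperplane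
   x_i = 0 or 1 costs one equation, an intersection stacks both formulations
   and equates their images and their values of c, and the convex hull of a
   union is Balas' disjunctive formulation, in which c y_1 and c y_2 are the
   weights and need no inequality of their own.  So phi(Q) has one of size
   |phi| m as soon as Q has.
   An extended formulation A y >= b of a polytope Q in the unit cube is
   homogenised with the extra coordinate as c.  If some A r >= 0 has a
   positive entry, one equation fixing the total slack forces c >= 0;
   otherwise c >= 0 holds anyway unless Q is a single point, and then
   phi(Q) = Q.  Finally, a bounded extended formulation describes the convex
   hull of the images of the faces of its feasible set on which T is
   constant. *)

Section ConvexHull.
Variables (R : realType) (n : nat).
Implicit Types S : set 'cV[R]_n.

Lemma subset_conv S : S `<=` conv S.
Proof.
move=> x Sx; exists 1%N, (fun _ => 1), (fun _ => x).
by rewrite !big_ord1 scale1r.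
Qed.

Lemma conv_mono S1 S2 : S1 `<=` S2 -> conv S1 `<=` conv S2.
Proof.
move=> S12 x [k [w [p [w_ge0 [w_sum1 [Sp ->]]]]]].
by exists k, w, p; split => //; split => //; split => // i; apply: S12.
Qed.

Lemma conv_segment S x z a b : conv S x -> conv S z ->
  0 <= a -> 0 <= b -> a + b = 1 -> conv S (a *: x + b *: z).
Proof.
move=> [k1 [w1 [p1 [w1_ge0 [w1_sum1 [Sp1 ->]]]]]].
move=> [k2 [w2 [p2 [w2_ge0 [w2_sum1 [Sp2 ->]]]]]] a_ge0 b_ge0 ab1.
have splitl i : split (lshift k2 i) = inl i := unsplitK (inl i).
have splitr i : split (rshift k1 i) = inr i := unsplitK (inr i).
exists (k1 + k2)%N,
  (fun i => match split i with inl i => a * w1 i | inr i => b * w2 i end),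
  (fun i => match split i with inl i => p1 i | inr i => p2 i end).
split; first by move=> i; case: (split i) => j; apply: mulr_ge0.
split.
  rewrite big_split_ord /=.
  under [X in _ + X]eq_bigr do rewrite splitr.
  under [X in X + _]eq_bigr do rewrite splitl.
  by rewrite -!mulr_sumr w1_sum1 w2_sum1 !mulr1.
split; first by move=> i; case: (split i) => j.
rewrite big_split_ord /=.
under [X in _ = _ + X]eq_bigr do rewrite splitr.
under [X in _ = X + _]eq_bigr do rewrite splitl.
by rewrite !scaler_sumr; congr (_ + _); apply: eq_bigr => i _; rewrite scalerA.
Qed.

End ConvexHull.

Lemma phiQ_sub (R : realType) n (phi : formula n) (Q : set 'cV[R]_n) :
  conv Q `<=` Q -> phiQ phi Q `<=` Q.
Proof.
move=> convQ; elim: phi => [i|f _|f IHf g IHg|f IHf g IHg] /=.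
- by move=> x [].
- by case: f => //= i x [].
- by move=> x [/IHf].
- by apply: subset_trans convQ; apply: conv_mono => x [/IHf|/IHg].
Qed.

Section Vectors.
Variable R : numDomainType.

Definition dot d (c : 'rV[R]_d) (y : 'cV[R]_d) : R := (c *m y) 0 0.

Definition nonneg m (v : 'cV[R]_m) : Prop := forall j, 0 <= v j 0.

Lemma mxDE k l (M N : 'M[R]_(k, l)) i j : (M + N) i j = M i j + N i j.
Proof. by rewrite mxE. Qed.

Lemma mxBE k l (M N : 'M[R]_(k, l)) i j : (M - N) i j = M i j - N i j.
Proof. by rewrite !mxE. Qed.

Lemma mxZE k l a (M : 'M[R]_(k, l)) i j : (a *: M) i j = a * M i j.
Proof. by rewrite mxE. Qed.

Lemma dotD d (c : 'rV[R]_d) y z : dot c (y + z) = dot c y + dot c z.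
Proof. by rewrite /dot mulmxDr mxE. Qed.

Lemma dotZ d (c : 'rV[R]_d) a y : dot c (a *: y) = a * dot c y.
Proof. by rewrite /dot -scalemxAr mxE. Qed.

Lemma dot0 d (c : 'rV[R]_d) : dot c 0 = 0.
Proof. by rewrite /dot mulmx0 mxE. Qed.

Lemma dot_sum d (c : 'rV[R]_d) k (F : 'I_k -> 'cV[R]_d) :
  dot c (\sum_(i < k) F i) = \sum_(i < k) dot c (F i).
Proof. by rewrite /dot mulmx_sumr summxE. Qed.

Lemma dotBl d (c1 c2 : 'rV[R]_d) a y : dot (c1 - a *: c2) y = dot c1 y - a * dot c2 y.
Proof. by rewrite /dot mulmxBl -scalemxAl mxBE mxZE. Qed.

Lemma dot_mulmxl d k (c : 'rV[R]_k) (B : 'M[R]_(k, d)) y : dot (c *m B) y = dot c (B *m y).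
Proof. by rewrite /dot mulmxA. Qed.

Lemma dot_row_col d1 d2 (c1 : 'rV[R]_d1) (c2 : 'rV[R]_d2) y1 y2 :
  dot (row_mx c1 c2) (col_mx y1 y2) = dot c1 y1 + dot c2 y2.
Proof. by rewrite /dot mul_row_col mxE. Qed.

Lemma dot_const1 m (v : 'cV[R]_m) : dot (const_mx 1) v = \sum_j v j 0.
Proof. by rewrite /dot mxE; apply: eq_bigr => j _; rewrite mxE mul1r. Qed.

Lemma nonnegZ m a (v : 'cV[R]_m) : 0 <= a -> nonneg v -> nonneg (a *: v).
Proof. by move=> a_ge0 v_ge0 j; rewrite mxZE mulr_ge0. Qed.

Lemma nonneg_sum m k (F : 'I_k -> 'cV[R]_m) :
  (forall i, nonneg (F i)) -> nonneg (\sum_(i < k) F i).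
Proof. by move=> F_ge0 j; rewrite summxE; apply: sumr_ge0 => i _; apply: F_ge0. Qed.

Lemma nonneg_col_mx m1 m2 (u : 'cV[R]_m1) (v : 'cV[R]_m2) :
  nonneg (col_mx u v) <-> nonneg u /\ nonneg v.
Proof.
split=> [uv_ge0|[u_ge0 v_ge0] j].
  by split=> j; [have := uv_ge0 (lshift m2 j); rewrite col_mxEu
                |have := uv_ge0 (rshift m1 j); rewrite col_mxEd].
by rewrite -(splitK j); case: (split j) => k /=; rewrite ?col_mxEu ?col_mxEd.
Qed.

Lemma nonneg0 m : nonneg (0 : 'cV[R]_m).
Proof. by move=> j; rewrite mxE. Qed.

Lemma nonneg_dot_const1 m (v : 'cV[R]_m) : nonneg v -> 0 <= dot (const_mx 1) v.
Proof. by move=> v_ge0; rewrite dot_const1 sumr_ge0. Qed.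

Lemma mx11_eq0 (M : 'M[R]_1) : M = 0 <-> M 0 0 = 0.
Proof.
split=> [->|M0]; first by rewrite mxE.
by apply/matrixP => i j; rewrite !ord1 M0 mxE.
Qed.

Lemma col_mx_eq0P m1 m2 k (M1 : 'M[R]_(m1, k)) (M2 : 'M[R]_(m2, k)) :
  col_mx M1 M2 = 0 <-> M1 = 0 /\ M2 = 0.
Proof.
split=> [|[-> ->]]; last by rewrite col_mx0.
by move/eqP; rewrite col_mx_eq0 => /andP [/eqP -> /eqP ->].
Qed.

Lemma mul_block_diag_col m1 m2 d1 d2 p (M1 : 'M[R]_(m1, d1)) (M2 : 'M[R]_(m2, d2))
    (y1 : 'M[R]_(d1, p)) (y2 : 'M[R]_(d2, p)) :
  block_mx M1 0 0 M2 *m col_mx y1 y2 = col_mx (M1 *m y1) (M2 *m y2).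
Proof. by rewrite mul_block_col !mul0mx addr0 add0r. Qed.

Lemma vsubmx_scalarK d (y : 'cV[R]_(d + 1)) : col_mx (usubmx y) (dsubmx y 0 0)%:M = y.
Proof. by rewrite -mx11_scalar vsubmxK. Qed.

End Vectors.

Section HomogeneousFormulation.
Variables (R : realType) (n : nat).

Definition hf_set d e m (T : 'M[R]_(n, d)) (A : 'M[R]_(m, d)) (E : 'M[R]_(e, d))
    (c : 'rV[R]_d) : set 'cV[R]_n :=
  [set x | exists y, nonneg (A *m y) /\ E *m y = 0 /\ dot c y = 1 /\ x = T *m y].

Definition hf_valid d e m (T : 'M[R]_(n, d)) (A : 'M[R]_(m, d)) (E : 'M[R]_(e, d))
    (c : 'rV[R]_d) : Prop :=
  forall y, nonneg (A *m y) -> E *m y = 0 ->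
    0 <= dot c y /\ (dot c y = 0 -> T *m y = 0).

Definition has_hf (P : set 'cV[R]_n) m : Prop :=
  exists d e (T : 'M[R]_(n, d)) (A : 'M[R]_(m, d)) (E : 'M[R]_(e, d)) (c : 'rV[R]_d),
    P = hf_set T A E c /\ hf_valid T A E c.

Lemma conv_hf_set_sub d e m (T : 'M[R]_(n, d)) (A : 'M[R]_(m, d)) (E : 'M[R]_(e, d)) c S :
  S `<=` hf_set T A E c -> conv S `<=` hf_set T A E c.
Proof.
move=> S_sub x [k [w [p [w_ge0 [w_sum1 [Sp ->]]]]]].
have /choice [y Hy] : forall i, hf_set T A E c (p i) by move=> i; apply/S_sub/Sp.
exists (\sum_(i < k) w i *: y i); split.
  rewrite mulmx_sumr; apply: nonneg_sum => i; rewrite -scalemxAr.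
  by apply: nonnegZ => //; case: (Hy i).
split.
  rewrite mulmx_sumr; apply: big1 => i _; rewrite -scalemxAr.
  by case: (Hy i) => _ [-> _]; rewrite scaler0.
split.
  rewrite dot_sum -w_sum1; apply: eq_bigr => i _; rewrite dotZ.
  by case: (Hy i) => _ [_ [-> _]]; rewrite mulr1.
rewrite mulmx_sumr; apply: eq_bigr => i _; rewrite -scalemxAr.
by case: (Hy i) => _ [_ [_ ->]].
Qed.

Lemma hf_set_rescale d e m (T : 'M[R]_(n, d)) (A : 'M[R]_(m, d)) (E : 'M[R]_(e, d)) c y :
  nonneg (A *m y) -> E *m y = 0 -> 0 < dot c y ->
  hf_set T A E c ((dot c y)^-1 *: (T *m y)).
Proof.
move=> Ay Ey cy_gt0; exists ((dot c y)^-1 *: y).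
rewrite -!scalemxAr Ey scaler0 dotZ mulVf ?gt_eqF //.
by split=> //; apply: nonnegZ; rewrite // invr_ge0 ltW.
Qed.

Lemma has_hf_set0 m : has_hf set0 m.
Proof.
exists 0%N, 0%N, 0, 0, 0, 0; split.
  apply/seteqP; split=> x //= [y [_ [_ [c01 _]]]].
  by move: c01; rewrite /dot mul0mx mxE => /eqP; rewrite eq_sym oner_eq0.
by move=> y _ _; rewrite /dot !mul0mx mxE.
Qed.

Lemma has_hf_hyperplane P m (i : 'I_n) (a : R) :
  has_hf P m -> has_hf [set x | P x /\ x i 0 = a] m.
Proof.
move=> [d [e [T [A [E [c [-> valid]]]]]]].
exists d, (e + 1)%N, T, A, (col_mx E (row i T - a *: c)), c; split; last first.
  by move=> y Ay; rewrite mul_col_mx => /col_mx_eq0P [Ey _]; apply: valid.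
have rowE y : ((row i T - a *: c) *m y) 0 0 = (T *m y) i 0 - a * dot c y.
  by rewrite /dot mulmxBl -scalemxAl -row_mul !mxE.
apply/seteqP; split=> x /=.
  move=> [[y [Ay [Ey [cy ->]]]] Tyi]; exists y; split=> //; split=> //.
  rewrite mul_col_mx Ey; apply/col_mx_eq0P; split=> //.
  by apply/mx11_eq0; rewrite rowE Tyi cy mulr1 subrr.
move=> [y [Ay [EEy [cy ->]]]]; move: EEy.
rewrite mul_col_mx => /col_mx_eq0P [Ey /mx11_eq0]; rewrite rowE cy mulr1 => /subr0_eq Tyi.
by split=> //; exists y.
Qed.

Lemma has_hf_setI P1 P2 m1 m2 :
  has_hf P1 m1 -> has_hf P2 m2 -> has_hf (P1 `&` P2) (m1 + m2).
Proof.
move=> [d1 [e1 [T1 [A1 [E1 [c1 [-> valid1]]]]]]].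
move=> [d2 [e2 [T2 [A2 [E2 [c2 [-> valid2]]]]]]].
pose E := col_mx (block_mx E1 0 0 E2) (col_mx (row_mx T1 (- T2)) (row_mx c1 (- c2))).
have E_eq0 y1 y2 : E *m col_mx y1 y2 = 0 <->
    [/\ E1 *m y1 = 0, E2 *m y2 = 0, T1 *m y1 = T2 *m y2 & dot c1 y1 = dot c2 y2].
  rewrite mul_col_mx mul_block_diag_col mul_col_mx !mul_row_col !mulNmx.
  split=> [|[-> -> -> c12]].
    move=> /col_mx_eq0P [/col_mx_eq0P [-> ->] /col_mx_eq0P [/subr0_eq -> c12]].
    by move/mx11_eq0: c12; rewrite mxBE => /subr0_eq.
  rewrite subrr !col_mx0; apply/col_mx_eq0P; split=> //; apply/col_mx_eq0P; split=> //.
  by apply/mx11_eq0; rewrite mxBE -/(dot c1 y1) -/(dot c2 y2) c12 subrr.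
exists (d1 + d2)%N, ((e1 + e2) + (n + 1))%N, (row_mx T1 0), (block_mx A1 0 0 A2), E,
  (row_mx c1 0).
have T_col y1 y2 : row_mx T1 (0 : 'M_(n, d2)) *m col_mx y1 y2 = T1 *m y1.
  by rewrite mul_row_col mul0mx addr0.
have c_col y1 y2 : dot (row_mx c1 (0 : 'rV_d2)) (col_mx y1 y2) = dot c1 y1.
  by rewrite dot_row_col {2}/dot mul0mx mxE addr0.
split; last first.
  move=> y; rewrite -[y]vsubmxK mul_block_diag_col T_col c_col.
  by move=> /nonneg_col_mx [A1y _] /E_eq0 [E1y _ _ _]; apply: valid1.
apply/seteqP; split=> x /=.
  move=> [[y1 [A1y [E1y [c1y ->]]]] [y2 [A2y [E2y [c2y T12]]]]].
  exists (col_mx y1 y2); rewrite mul_block_diag_col T_col c_col.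
  split; first exact/nonneg_col_mx.
  by split=> //; apply/E_eq0; split=> //; rewrite c1y c2y.
move=> [y]; rewrite -[y]vsubmxK mul_block_diag_col T_col c_col.
move=> [/nonneg_col_mx [A1y A2y] [/E_eq0 [E1y E2y T12 c12] [c1y ->]]].
split; first by exists (usubmx y).
by exists (dsubmx y); rewrite -c12 -T12.
Qed.

Lemma has_hf_convU P1 P2 m1 m2 :
  has_hf P1 m1 -> has_hf P2 m2 -> has_hf (conv (P1 `|` P2)) (m1 + m2).
Proof.
move=> [d1 [e1 [T1 [A1 [E1 [c1 [-> valid1]]]]]]].
move=> [d2 [e2 [T2 [A2 [E2 [c2 [-> valid2]]]]]]].
exists (d1 + d2)%N, (e1 + e2)%N, (row_mx T1 T2), (block_mx A1 0 0 A2),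
  (block_mx E1 0 0 E2), (row_mx c1 c2).
split.
  apply/seteqP; split.
    apply: conv_hf_set_sub => x [[y [Ay [Ey [cy ->]]]]|[y [Ay [Ey [cy ->]]]]].
      exists (col_mx y 0); rewrite !mul_block_diag_col dot_row_col mul_row_col.
      rewrite !mulmx0 dot0 Ey col_mx0 !addr0 cy; split=> //.
      by apply/nonneg_col_mx; split=> // j; rewrite mxE.
    exists (col_mx 0 y); rewrite !mul_block_diag_col dot_row_col mul_row_col.
    rewrite !mulmx0 dot0 Ey col_mx0 !add0r cy; split=> //.
    by apply/nonneg_col_mx; split=> // j; rewrite mxE.
  move=> x [y]; rewrite -[y]vsubmxK !mul_block_diag_col dot_row_col mul_row_col.
  set y1 := usubmx y; set y2 := dsubmx y.
  move=> [/nonneg_col_mx [A1y A2y] [/col_mx_eq0P [E1y E2y] [cy ->]]].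
  have [c1y_ge0 T1y] := valid1 _ A1y E1y; have [c2y_ge0 T2y] := valid2 _ A2y E2y.
  have [c1y0|c1y_neq0] := eqVneq (dot c1 y1) 0.
    apply: subset_conv; right; rewrite (T1y c1y0) add0r; exists y2.
    by split=> //; split=> //; split=> //; rewrite -cy c1y0 add0r.
  have [c2y0|c2y_neq0] := eqVneq (dot c2 y2) 0.
    apply: subset_conv; left; rewrite (T2y c2y0) addr0; exists y1.
    by split=> //; split=> //; split=> //; rewrite -cy c2y0 addr0.
  have c1y_gt0 : 0 < dot c1 y1 by rewrite lt_def c1y_neq0.
  have c2y_gt0 : 0 < dot c2 y2 by rewrite lt_def c2y_neq0.
  rewrite -[T1 *m y1](scalerKV c1y_neq0) -[T2 *m y2](scalerKV c2y_neq0).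
  apply: conv_segment; rewrite ?ltW //; apply: subset_conv; [left|right];
    exact: hf_set_rescale.
move=> y; rewrite -[y]vsubmxK !mul_block_diag_col dot_row_col mul_row_col.
move=> /nonneg_col_mx [A1y A2y] /col_mx_eq0P [E1y E2y].
have [c1y_ge0 T1y] := valid1 _ A1y E1y; have [c2y_ge0 T2y] := valid2 _ A2y E2y.
split; first exact: addr_ge0.
move=> /eqP; rewrite paddr_eq0 // => /andP [/eqP /T1y -> /eqP /T2y ->].
by rewrite addr0.
Qed.

Lemma hf_valid_total_slack d m (T : 'M[R]_(n, d)) (A : 'M[R]_(m, d)) c (M : R) :
  0 < M -> (forall y, nonneg (A *m y) -> dot c y = 0 -> T *m y = 0) ->
  hf_valid T A (const_mx 1 *m A - M *: c) c.
Proof.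
move=> M_gt0 cone0 y Ay /mx11_eq0; rewrite -/(dot _ y) dotBl dot_mulmxl.
move=> /subr0_eq slack_eq; split; last exact: cone0.
by rewrite -(pmulr_rge0 _ M_gt0) -slack_eq nonneg_dot_const1.
Qed.

Lemma hf_set_total_slack d m (T : 'M[R]_(n, d)) (A : 'M[R]_(m, d)) c (M : R) y :
  nonneg (A *m y) -> dot (const_mx 1) (A *m y) = M -> dot c y = 1 ->
  hf_set T A (const_mx 1 *m A - M *: c) c (T *m y).
Proof.
move=> Ay slack cy; exists y; split=> //; split=> //; apply/mx11_eq0.
by rewrite -/(dot _ y) dotBl dot_mulmxl slack cy mulr1 subrr.
Qed.

End HomogeneousFormulation.

Lemma has_hf_phiQ (R : realType) n (Q : set 'cV[R]_n) m (phi : formula n) :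
  has_hf Q m -> has_hf (phiQ phi Q) (fsize phi * m).
Proof.
move=> hfQ; elim: phi => [i|f _|f IHf g IHg|f IHf g IHg] /=.
- by rewrite mul1n; apply: has_hf_hyperplane.
- by case: f => [i|f|f g|f g] /=; rewrite ?mul1n; [apply: has_hf_hyperplane|apply: has_hf_set0..].
- by rewrite mulnDl; apply: has_hf_setI.
- by rewrite mulnDl; apply: has_hf_convU.
Qed.

Lemma eq0_of_bounded_ray (R : realFieldType) (a k : R) :
  (forall s, 0 <= s -> 0 <= a + s * k <= 1) -> k = 0.
Proof.
move=> ray; have /andP [a_ge0 a_le1] := ray 0 (lexx _); rewrite mul0r addr0 in a_ge0 a_le1.
have [k_lt0|k_gt0|//] := ltgtP k 0.
  have s_ge0 : 0 <= - 2 / k by apply: mulr_le0; [lra|rewrite invr_le0 ltW].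
  by have := ray _ s_ge0; rewrite divfK ?lt_eqF // => /andP [? _]; lra.
have s_ge0 : 0 <= 2 / k by apply: divr_ge0; [lra|rewrite ltW].
by have := ray _ s_ge0; rewrite divfK ?gt_eqF // => /andP [_ ?]; lra.
Qed.

Section ExtendedFormulation.
Variables (R : realType) (n d m : nat).
Variables (T : 'M[R]_(n, d)) (A : 'M[R]_(m, d)) (t : 'cV[R]_n) (b : 'cV[R]_m).

Definition feasible (y : 'cV[R]_d) : Prop := forall j, b j 0 <= (A *m y) j 0.

Definition efset : set 'cV[R]_n := [set x | exists y, feasible y /\ x = T *m y + t].

Definition ef_bounded : Prop := forall r, nonneg (A *m r) -> T *m r = 0.

Lemma feasibleE y : feasible y <-> nonneg (A *m y - b).
Proof. by split=> y_feas j; have := y_feas j; rewrite mxBE subr_ge0. Qed.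

Lemma feasible_shift z r s : feasible z -> nonneg (A *m r) -> 0 <= s -> feasible (z + s *: r).
Proof.
move=> z_feas Ar s_ge0 j; rewrite mulmxDr -scalemxAr mxDE mxZE.
by have := z_feas j; have := mulr_ge0 s_ge0 (Ar j); lra.
Qed.

Lemma ef_bounded_cube : efset `<=` @cube R n -> efset !=set0 -> ef_bounded.
Proof.
move=> ef_cube [_ [z [z_feas _]]] r Ar; apply/matrixP => i l; rewrite !ord1 [RHS]mxE.
apply: (@eq0_of_bounded_ray _ ((T *m z + t) i 0)) => s s_ge0.
have : @cube R n (T *m (z + s *: r) + t).
  by apply: ef_cube; exists (z + s *: r); split=> //; apply: feasible_shift.
by move=> /(_ i); rewrite mulmxDr -scalemxAr !mxDE mxZE mulrC addrAC.
Qed.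

Let Th := row_mx T t.
Let Ah := row_mx A (- b).
Let ch : 'rV[R]_(d + 1) := row_mx 0 1.

Lemma hom_AE y a : Ah *m col_mx y a%:M = A *m y - a *: b.
Proof. by rewrite mul_row_col mul_mx_scalar scalerN. Qed.

Lemma hom_TE y a : Th *m col_mx y a%:M = T *m y + a *: t.
Proof. by rewrite mul_row_col mul_mx_scalar. Qed.

Lemma hom_cE y a : dot ch (col_mx y a%:M) = a.
Proof. by rewrite dot_row_col /dot mul0mx mul1mx !mxE eqxx mulr1n add0r. Qed.

Lemma hom_recession : ef_bounded ->
  forall y, nonneg (Ah *m y) -> dot ch y = 0 -> Th *m y = 0.
Proof.
move=> bounded y; rewrite -[y]vsubmx_scalarK hom_AE hom_cE hom_TE => Ay a0.
by rewrite a0 scale0r addr0 bounded //; rewrite a0 scale0r subr0 in Ay.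
Qed.

Lemma hf_set_hom_sub e (E : 'M[R]_(e, d + 1)) : hf_set Th Ah E ch `<=` efset.
Proof.
move=> _ [y [Ay [_ [cy ->]]]]; move: Ay cy.
rewrite -[y]vsubmx_scalarK hom_cE hom_AE hom_TE => Ay a1; rewrite a1 scale1r in Ay.
by exists (usubmx y); rewrite a1 scale1r; split=> //; apply/feasibleE.
Qed.

Lemma efset_hom : efset = hf_set Th Ah (0 : 'M_(0, d + 1)) ch.
Proof.
apply/seteqP; split; last exact: hf_set_hom_sub.
move=> _ [y [y_feas ->]]; exists (col_mx y 1%:M).
rewrite hom_cE hom_TE hom_AE !scale1r mul0mx; split=> //; exact/feasibleE.
Qed.

Lemma efset_conv : conv efset `<=` efset.
Proof. by rewrite efset_hom; apply: conv_hf_set_sub. Qed.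

(* If (y, a) with a < 0 were in the cone, z - a^-1 y would be a recession
   direction for every feasible z, so A z, and hence T z, would not depend on z. *)
Lemma has_hf_efset_lineality : ef_bounded ->
  (forall r, nonneg (A *m r) -> A *m r = 0) ->
  (exists q1 q2, efset q1 /\ efset q2 /\ q1 <> q2) -> has_hf efset m.
Proof.
move=> bounded lineal [_ [_ [[z1 [z1_feas ->]] [[z2 [z2_feas ->]] Tz12]]]].
exists (d + 1)%N, 0%N, Th, Ah, 0, ch; split; first exact: efset_hom.
move=> y' Ay' _; split; last exact: hom_recession.
move: Ay'; rewrite -[y']vsubmx_scalarK hom_cE hom_AE.
set y := usubmx y'; set a := dsubmx y' 0 0 => Ay.
rewrite leNgt; apply/negP => a_lt0; apply: Tz12.
have Az z : feasible z -> A *m z = a^-1 *: (A *m y).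
  move=> z_feas; apply/subr0_eq; rewrite scalemxAr -mulmxBr; apply: lineal => j.
  rewrite mulmxBr -scalemxAr mxBE mxZE subr_ge0; apply: le_trans (z_feas j).
  rewrite -[b j 0](mulKf (ltr0_neq0 a_lt0)) ler_nM2l ?invr_lt0 //.
  by have := Ay j; rewrite mxBE mxZE subr_ge0.
have A12 : A *m (z1 - z2) = 0 by rewrite mulmxBr (Az _ z1_feas) (Az _ z2_feas) subrr.
have T12 : T *m (z1 - z2) = 0 by apply: bounded; rewrite A12; apply: nonneg0.
by rewrite mulmxBr in T12; rewrite (subr0_eq T12).
Qed.

(* The points spanning efset are moved along r0, which changes neither their
   feasibility nor their image, until their total slack is M. *)
Lemma has_hf_efset_slack r0 j0 : ef_bounded -> polytope efset ->
  nonneg (A *m r0) -> 0 < (A *m r0) j0 0 -> has_hf efset m.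
Proof.
move=> bounded [k [p efset_p]] Ar0 Ar0_j0.
have /choice [z Hz] : forall i, exists z, feasible z /\ p i = T *m z + t.
  by move=> i; have : efset (p i) by rewrite efset_p; apply: subset_conv; exists i.
pose slack z := dot (const_mx 1) (A *m z - b).
have slack_ge0 i : 0 <= slack (z i) by apply/nonneg_dot_const1/feasibleE; case: (Hz i).
pose M := 1 + \sum_i slack (z i).
have sum_ge0 : 0 <= \sum_i slack (z i) by apply: sumr_ge0 => i _; apply: slack_ge0.
have slack_lt i : slack (z i) < M.
  have rest_ge0 : 0 <= \sum_(l | l != i) slack (z l).
    by apply: sumr_ge0 => l _; apply: slack_ge0.
  by rewrite /M (bigD1 i) //=; lra.
have M_gt0 : 0 < M by rewrite /M; lra.
have r0_gt0 : 0 < dot (const_mx 1) (A *m r0).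
  have rest_ge0 : 0 <= \sum_(j | j != j0) (A *m r0) j 0.
    by apply: sumr_ge0 => j _; apply: Ar0.
  by rewrite dot_const1 (bigD1 j0) //=; lra.
exists (d + 1)%N, 1%N, Th, Ah, (const_mx 1 *m Ah - M *: ch), ch.
split; last by apply: hf_valid_total_slack => //; apply: hom_recession.
apply/seteqP; split; last exact: hf_set_hom_sub.
rewrite efset_p; apply: conv_hf_set_sub => _ [i _ <-].
have [z_feas ->] := Hz i.
pose s := (M - slack (z i)) / dot (const_mx 1) (A *m r0).
have s_ge0 : 0 <= s by rewrite divr_ge0 ?subr_ge0 ?ltW ?slack_lt.
have <- : T *m (z i + s *: r0) = T *m z i.
  by rewrite mulmxDr -scalemxAr (bounded _ Ar0) scaler0 addr0.
rewrite -[t]scale1r -hom_TE; apply: hf_set_total_slack; last exact: hom_cE.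
  by rewrite hom_AE scale1r; apply/feasibleE/feasible_shift.
rewrite hom_AE scale1r mulmxDr -scalemxAr addrAC dotD dotZ -/(slack _).
by rewrite /s divfK ?gt_eqF // addrC subrK.
Qed.

Lemma has_hf_efset : ef_bounded -> polytope efset ->
  (exists q1 q2, efset q1 /\ efset q2 /\ q1 <> q2) -> has_hf efset m.
Proof.
move=> bounded efset_poly two_points.
have [[r [Ar [j Arj]]]|no_slack] :=
  pselect (exists r, nonneg (A *m r) /\ exists j, 0 < (A *m r) j 0).
  exact: has_hf_efset_slack Ar Arj.
apply: has_hf_efset_lineality => // r Ar; apply/matrixP => j l; rewrite ord1 [RHS]mxE.
apply/eqP; rewrite eq_le (Ar j) andbT leNgt; apply/negP => Arj.
by apply: no_slack; exists r; split=> //; exists j.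
Qed.

End ExtendedFormulation.

Lemma kernel_parametrization (F : fieldType) k d (M : 'M[F]_(k, d)) :
  exists N : 'M[F]_d, M *m N = 0 /\
    forall v : 'cV[F]_d, M *m v = 0 -> exists z : 'cV[F]_d, v = N *m z.
Proof.
exists (kermx M^T)^T; split.
  by have := congr1 trmx (mulmx_ker M^T); rewrite trmx_mul trmxK trmx0.
move=> v Mv0; have : (v^T <= kermx M^T)%MS by rewrite sub_kermx -trmx_mul Mv0 trmx0.
by move=> /submxP [D vD]; exists D^T; rewrite -[v]trmxK vD trmx_mul.
Qed.

Lemma hf_bounded_ef (R : realType) n (P : set 'cV[R]_n) m : has_hf P m -> P !=set0 ->
  exists d (T : 'M[R]_(n, d)) (A : 'M[R]_(m, d)) t b,
    P = efset T A t b /\ ef_bounded T A.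
Proof.
move=> [d [e [T [A [E [c [-> valid]]]]]]] [_ [y0 [Ay0 [Ey0 [cy0 _]]]]].
have [N [EcN0 EcN]] := kernel_parametrization (col_mx E c).
move: EcN0; rewrite mul_col_mx => /col_mx_eq0P [EN0 cN0].
exists d, (T *m N), (A *m N), (T *m y0), (- (A *m y0)); split; last first.
  move=> r ANr; rewrite -mulmxA.
  have ENr : E *m (N *m r) = 0 by rewrite mulmxA EN0 mul0mx.
  have ANr' : nonneg (A *m (N *m r)) by rewrite mulmxA.
  have [_] := valid (N *m r) ANr' ENr.
  by apply; rewrite /dot mulmxA cN0 mul0mx mxE.
apply/seteqP; split=> x.
  move=> [y [Ay [Ey [cy ->]]]].
  have [z yz] : exists z, y - y0 = N *m z.
    apply: EcN; rewrite mul_col_mx !mulmxBr Ey Ey0 subrr.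
    apply/col_mx_eq0P; split=> //; apply/mx11_eq0.
    by rewrite mxBE -/(dot c y) -/(dot c y0) cy cy0 subrr.
  exists z; split; last by rewrite -mulmxA -yz mulmxBr subrK.
  by move=> j; rewrite -mulmxA -yz mulmxBr mxBE mxE; have := Ay j; lra.
move=> [z [z_feas ->]]; exists (y0 + N *m z); split.
  move=> j; rewrite mulmxDr mulmxA mxDE; have := z_feas j; rewrite mxE.
  by rewrite -subr_ge0 opprK addrC.
split; first by rewrite mulmxDr mulmxA EN0 mul0mx addr0.
split; first by rewrite dotD cy0 /dot mulmxA cN0 mul0mx mxE addr0.
by rewrite mulmxDr mulmxA addrC.
Qed.

Section BoundedFormulationPolytope.
Variables (R : realType) (n d m : nat).
Variables (T : 'M[R]_(n, d)) (A : 'M[R]_(m, d)) (t : 'cV[R]_n) (b : 'cV[R]_m).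
Hypothesis bounded : ef_bounded T A.

Definition tight (y : 'cV[R]_d) : {set 'I_m} := [set j | (A *m y) j 0 == b j 0].

Lemma feasible_tighten y r : feasible A b y ->
  {in tight y, forall j, (A *m r) j 0 = 0} -> (exists j, (A *m r) j 0 < 0) ->
  exists2 s, 0 < s & feasible A b (y + s *: r) /\ tight y \proper tight (y + s *: r).
Proof.
move=> y_feas r_tight [j0 Arj0].
pose step j := ((A *m y) j 0 - b j 0) / (- (A *m r) j 0).
have [j1 Arj1 step_min] := @arg_minP _ _ _ j0 (fun j => (A *m r) j 0 < 0) step Arj0.
have slack_gt0 j : (A *m r) j 0 < 0 -> b j 0 < (A *m y) j 0.
  move=> Arj; rewrite lt_def y_feas andbT; apply/negP => /eqP bj.
  by move: Arj; rewrite r_tight ?ltxx // inE bj.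
have step_gt0 j : (A *m r) j 0 < 0 -> 0 < step j.
  by move=> Arj; rewrite divr_gt0 ?oppr_gt0 // subr_gt0 slack_gt0.
have shiftE s j : (A *m (y + s *: r)) j 0 = (A *m y) j 0 + s * (A *m r) j 0.
  by rewrite mulmxDr -scalemxAr mxDE mxZE.
exists (step j1); first exact: step_gt0.
split.
  move=> j; rewrite shiftE.
  have [Arj|Arj] := ltP ((A *m r) j 0) 0.
    have : step j1 * - (A *m r) j 0 <= (A *m y) j 0 - b j 0.
      apply: le_trans (ler_wpM2r _ (step_min j Arj)) _; first by rewrite oppr_ge0 ltW.
      by rewrite /step mulfVK // oppr_eq0 lt_eqF.
    by rewrite mulrN; lra.
  have := y_feas j; have : 0 <= step j1 * (A *m r) j 0 by rewrite mulr_ge0 // ltW // step_gt0.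
  lra.
rewrite finset.properEneq; apply/andP; split.
  apply/eqP => tight_eq.
  have : j1 \in tight (y + step j1 *: r).
    rewrite inE shiftE /step invrN mulrN mulNr mulfVK; last by rewrite lt_eqF.
    by rewrite opprB addrC subrK.
  by rewrite -tight_eq inE => /eqP bj1; have := slack_gt0 j1 Arj1; rewrite bj1 ltxx.
apply/fintype.subsetP => j; rewrite !inE shiftE => /eqP Ayj.
by rewrite r_tight ?inE ?Ayj // mulr0 addr0.
Qed.

Definition on_face (S : {set 'I_m}) y :=
  feasible A b y /\ {in S, forall j, (A *m y) j 0 = b j 0}.

Definition flat_face S := forall y1 y2, on_face S y1 -> on_face S y2 -> T *m y1 = T *m y2.

Lemma on_face_tight y : feasible A b y -> on_face (tight y) y.
Proof. by move=> y_feas; split=> // j; rewrite inE => /eqP. Qed.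

Lemma feasible_split y : feasible A b y -> ~ flat_face (tight y) ->
  exists y1 y2 a, [/\ feasible A b y1 /\ tight y \proper tight y1,
                      feasible A b y2 /\ tight y \proper tight y2,
                      0 <= a <= 1 &
                      T *m y + t = a *: (T *m y1 + t) + (1 - a) *: (T *m y2 + t)].
Proof.
move=> y_feas not_flat.
have [y1 [y2 [face1 [face2 T12]]]] : exists y1 y2,
    on_face (tight y) y1 /\ on_face (tight y) y2 /\ T *m y1 <> T *m y2.
  apply: contra_notP not_flat => no_pair z1 z2 face1 face2.
  by apply: contra_notP no_pair => ?; exists z1, z2.
pose r := y2 - y1.
have r_tight : {in tight y, forall j, (A *m r) j 0 = 0}.
  by move=> j jt; rewrite mulmxBr mxBE face1.2 // face2.2 // subrr.
have Nr_tight : {in tight y, forall j, (A *m - r) j 0 = 0}.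
  by move=> j jt; rewrite mulmxN mxE r_tight // oppr0.
have Tr : T *m r != 0 by rewrite mulmxBr subr_eq0 eq_sym; apply/eqP.
have descent (r' : 'cV[R]_d) : T *m r' != 0 -> exists j, (A *m r') j 0 < 0.
  move=> Tr'; apply: contra_notP (negP Tr') => no_neg; apply/eqP; apply: bounded => j.
  by rewrite leNgt; apply/negP => ?; apply: no_neg; exists j.
have [s1 s1_gt0 [feas1 tight1]] := feasible_tighten y_feas r_tight (descent _ Tr).
have TNr : T *m - r != 0 by rewrite mulmxN oppr_eq0.
have [s2 s2_gt0 [feas2 tight2]] := feasible_tighten y_feas Nr_tight (descent _ TNr).
have s12_gt0 : 0 < s1 + s2 by rewrite addr_gt0.
exists (y + s1 *: r), (y + s2 *: - r), (s2 / (s1 + s2)); split=> //.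
  by rewrite divr_ge0 ?(ltW s2_gt0) ?(ltW s12_gt0) //= ler_pdivrMr // mul1r lerDr ltW.
rewrite !mulmxDr -!scalemxAr mulmxN; move: (T *m y) (T *m r) => u v.
by apply/matrixP => i j; rewrite !mxE; field; rewrite gt_eqF.
Qed.

Section FacePoints.
Variable x0 : 'cV[R]_n.

(* [x0] is a junk value for the faces on which T is not constant. *)
Definition face_point (S : {set 'I_m}) : 'cV[R]_n :=
  if pselect (exists y, on_face S y /\ flat_face S) is left ex
  then T *m sval (cid ex) + t else x0.

Lemma face_point_efset S : efset T A t b x0 -> efset T A t b (face_point S).
Proof.
rewrite /face_point; case: pselect => // ex _.
by have [[feas _] _] := svalP (cid ex); exists (sval (cid ex)).
Qed.

Lemma face_pointE S y : on_face S y -> flat_face S -> face_point S = T *m y + t.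
Proof.
move=> face flat; rewrite /face_point; case: pselect => [ex|]; last by case; exists y.
by have [face' _] := svalP (cid ex); rewrite (flat _ _ face' face).
Qed.

Definition face_points (i : 'I_#|{set 'I_m}|) := face_point (enum_val i).

Lemma conv_face_points y : feasible A b y -> conv (range face_points) (T *m y + t).
Proof.
suff: forall k y, (#|~: tight y| < k)%N -> feasible A b y ->
    conv (range face_points) (T *m y + t) by apply; apply: ltnSn.
elim=> [|k IH] {}y y_cnt y_feas; first by rewrite ltn0 in y_cnt.
have [flat|not_flat] := pselect (flat_face (tight y)).
  apply: subset_conv; exists (enum_rank (tight y)) => //.
  by rewrite /face_points enum_rankK (face_pointE (on_face_tight y_feas) flat).
have [y1 [y2 [a [[feas1 tight1] [feas2 tight2] /andP [a_ge0 a_le1] ->]]]] :=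
  feasible_split y_feas not_flat.
rewrite ltnS in y_cnt.
have smaller y' : tight y \proper tight y' -> (#|~: tight y'| < k)%N.
  by move=> tight'; apply: leq_trans y_cnt; apply: proper_card; rewrite properC.
apply: conv_segment; rewrite ?subr_ge0 //; last by rewrite addrC subrK.
  by apply: IH => //; apply: smaller.
by apply: IH => //; apply: smaller.
Qed.

End FacePoints.

Lemma polytope_efset : efset T A t b !=set0 -> polytope (efset T A t b).
Proof.
move=> [x0 x0_in]; exists #|{set 'I_m}|, (face_points x0); apply/seteqP; split.
  by move=> _ [y [y_feas ->]]; apply: conv_face_points.
have : range (face_points x0) `<=` efset T A t b.
  by move=> _ [S _ <-]; apply: face_point_efset.
by move=> /conv_mono sub x /sub; apply: efset_conv.
Qed.

End BoundedFormulationPolytope.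

Lemma has_hf_polytope (R : realType) n (Q : set 'cV[R]_n) : polytope Q -> exists k, has_hf Q k.
Proof.
move=> [k [p ->]].
pose P : 'M[R]_(n, k) := \matrix_(i, j) p j i 0.
have PE (w : 'cV[R]_k) : P *m w = \sum_j w j 0 *: p j.
  apply/matrixP => i l; rewrite !ord1 mxE summxE; apply: eq_bigr => j _.
  by rewrite !mxE mulrC.
exists k, k, 0%N, P, 1%:M, 0, (const_mx 1); split; last first.
  move=> w; rewrite mul1mx => w_ge0 _; split; first exact: nonneg_dot_const1.
  move=> /eqP; rewrite dot_const1 psumr_eq0 // => /allP w0.
  by rewrite PE big1 // => j _; rewrite (eqP (w0 j (mem_index_enum _))) scale0r.
apply/seteqP; split.
  apply: conv_hf_set_sub => _ [j _ <-]; exists (delta_mx j 0).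
  rewrite mul1mx mul0mx -colE dot_const1 (bigD1 j) //= big1 => [|l /negPf lj].
    split; first by move=> l; rewrite mxE; case: eqP.
    by rewrite mxE !eqxx addr0; split=> //; split=> //; apply/matrixP => i l; rewrite !mxE ord1.
  by rewrite mxE lj.
move=> _ [w [w_ge0 [_ [w_sum1 ->]]]]; rewrite mul1mx in w_ge0.
exists k, (fun j => w j 0), p; split=> //; split; first by rewrite -dot_const1.
by split; [move=> j; exists j | rewrite PE].
Qed.

Lemma xc_le (R : realType) n (P : set 'cV[R]_n) m : has_ef P m -> (xc P <= m)%N.
Proof.
move=> efP; rewrite /xc; case: pselect => [ex|]; last by case; exists m.
by case: ex => m0 efP0 /=; case: ex_minnP => k _; apply; apply/asboolP.
Qed.

Lemma has_ef_xc (R : realType) n (P : set 'cV[R]_n) m : has_ef P m -> has_ef P (xc P).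
Proof.
move=> efP; rewrite /xc; case: pselect => [ex|]; last by case; exists m.
by case: ex => m0 efP0 /=; case: ex_minnP => k /asboolP.
Qed.

Lemma polytope_conv_sub (R : realType) n (Q : set 'cV[R]_n) : polytope Q -> conv Q `<=` Q.
Proof.
by move=> /has_hf_polytope [k [d [e [T [A [E [c [-> _]]]]]]]]; apply: conv_hf_set_sub.
Qed.

Lemma xc_efset (R : realType) n (Q : set 'cV[R]_n) : polytope Q -> Q !=set0 ->
  exists d (T : 'M[R]_(n, d)) (A : 'M[R]_(xc Q, d)) t b, Q = efset T A t b.
Proof.
move=> /has_hf_polytope [k hfQ] Q_ne; apply: (@has_ef_xc _ _ _ k).
by have [d [T [A [t [b [-> _]]]]]] := hf_bounded_ef hfQ Q_ne; exists d, T, A, t, b.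
Qed.

Lemma fsize_gt0 n (phi : formula n) : (0 < fsize phi)%N.
Proof. by elim: phi => //= f f_gt0 g _; rewrite addn_gt0 f_gt0. Qed.

Theorem proposition4p2 (R : realType) (n : nat) (phi : formula n)
  (Q : set 'cV[R]_n) :
  reduced phi -> polytope Q -> Q `<=` @cube R n ->
  phiQ phi Q !=set0 ->
  polytope (phiQ phi Q) /\ (xc (phiQ phi Q) <= fsize phi * xc Q)%N.
Proof.
move=> _ Q_poly Q_cube phiQ_ne.
have phiQ_sub_Q : phiQ phi Q `<=` Q := phiQ_sub (polytope_conv_sub Q_poly).
have Q_ne : Q !=set0 by case: phiQ_ne => x /phiQ_sub_Q; exists x.
have [d [T [A [t [b Q_ef]]]]] := xc_efset Q_poly Q_ne.
have [two_points|one_point] := pselect (exists q1 q2, Q q1 /\ Q q2 /\ q1 <> q2).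
  have bounded : ef_bounded T A.
    by apply: (ef_bounded_cube (t := t) (b := b)); rewrite -Q_ef.
  have hfQ : has_hf Q (xc Q) by rewrite {1}Q_ef; apply: has_hf_efset; rewrite -?Q_ef.
  have [d' [T' [A' [t' [b' [phiQ_ef bounded']]]]]] :=
    hf_bounded_ef (has_hf_phiQ phi hfQ) phiQ_ne.
  split; first by rewrite phiQ_ef; apply: (polytope_efset bounded'); rewrite -phiQ_ef.
  by apply: xc_le; exists d', T', A', t', b'.
have -> : phiQ phi Q = Q.
  apply/seteqP; split=> // y Qy; case: phiQ_ne => x phiQx.
  suff -> : y = x by [].
  by apply: contra_notP one_point => yx; exists y, x; split=> //; split; [apply: phiQ_sub_Q|].
by split=> //; rewrite leq_pmull // fsize_gt0.
Qed.
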